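(* Let $(A,d)$ and $(A',d')$ be unital dg-algebras over $\mathbb{R}$, let $l\ge 2$, and let $f_i\in \mathrm{Hom}^0(A[1]^{\otimes i},A'[1])$, $i=1,\dots,l-1$, be linear maps such that $f_1$ is unital, i.e. $f_1(1)=1$, and $f_2,\dots,f_{l-1}$ are normal. Define the multilinear map $\Psi_l[f_1,\dots,f_{l-1}]: A[1]^{\otimes l}\to A'[1]$ by $$\Psi_l[f_1,\ldots,f_{l-1}](a_1,\ldots,a_l)=\sum_{i=1}^{l-1}(-1)^{\bar a_1+\cdots+\bar a_i}f_{l-1}(a_1,\ldots,a_ia_{i+1},\ldots,a_l)-\sum_{i=1}^{l-1}(-1)^{\bar a_1+\cdots+\bar a_i}f_i(a_1,\ldots,a_i)\,f_{l-i}(a_{i+1},\ldots,a_l)$$ for homogeneous $a_1,\dots,a_l$, where products are taken in $A$ resp. $A'$. Then $\Psi_l[f_1,\dots,f_{l-1}]$ is normal.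
   Context: For a graded vector space $A=\bigoplus A_n$, the shifted space $A[1]$ has $A[1]_n=A_{n+1}$; for homogeneous $a$ one writes $\bar a=\deg a-1$ for its degree in $A[1]$, where $\deg a$ is its degree in $A$. $\mathrm{Hom}^0$ denotes degree-preserving linear maps. A multilinear map $f: A[1]^{\otimes l}\to A'[1]$ is called normal if $f(a_1,\dots,a_l)=0$ whenever some argument $a_i$ equals the unit $1\in A$. *)

From HB Require Import structures.
From mathcomp Require Import all_boot all_order all_algebra.
From mathcomp Require Export reals.
Set Implicit Arguments. Unset Strict Implicit. Unset Printing Implicit Defensive.
Import Order.TTheory GRing.Theory Num.Theory.
Local Open Scope ring_scope.

(* A unital (associative) Z-graded dg-algebra over a field R:
   the carrier is an algebra A; [hom n a] means "a is homogeneous of degree n". *)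
Record dga (R : fieldType) (A : algType R) := DGA {
  hom : int -> pred A;
  hom0 : forall n, hom n 0;
  homD : forall n (c : R) x y, hom n x -> hom n y -> hom n (c *: x + y);
  hom_span : forall a : A, exists (s : seq int) (c : int -> A),
      [/\ uniq s, (forall m, hom m (c m)) & a = \sum_(m <- s) c m];
  hom_indep : forall (s : seq int) (c : int -> A), uniq s ->
      (forall m, hom m (c m)) -> \sum_(m <- s) c m = 0 ->
      forall m, m \in s -> c m = 0;
  hom_one : hom 0 1;
  hom_mul : forall m n a b, hom m a -> hom n b -> hom (m + n) (a * b);
  dif : A -> A;
  dif_lin : forall (c : R) x y, dif (c *: x + y) = c *: dif x + dif y;
  dif_hom : forall n a, hom n a -> hom (n + 1) (dif a);
  dif_sq : forall a, dif (dif a) = 0;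
  dif_leib : forall n a b, hom n a ->
      dif (a * b) = dif a * b + ((-1) ^ n) *: (a * dif b)
}.

Section Maps.
Variables (R : fieldType) (A A' : algType R) (GA : dga A) (GA' : dga A').

(* A k-ary map A[1]^{(x)k} -> A'[1] is represented by a function on
   sequences of length k. *)

Definition multilinear (k : nat) (F : seq A -> A') :=
  forall (s t : seq A) (c : R) (x y : A), (size s + size t).+1 = k ->
    F (s ++ (c *: x + y) :: t) = c *: F (s ++ x :: t) + F (s ++ y :: t).

(* homogeneous tuples: a_j has (unshifted) degree n_j *)
Definition homtuple (k : nat) (a : seq A) (n : seq int) :=
  [/\ size a = k, size n = k & forall j, (j < k)%N -> hom GA (nth 0 n j) (nth 0 a j)].

(* degree 0 in the shifted grading: shifted degrees sum, i.e.
   deg' F(a_1..a_k) - 1 = sum_j (deg a_j - 1) *)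
Definition preserves_shifted_degree (k : nat) (F : seq A -> A') :=
  forall a n, homtuple k a n ->
    hom GA' ((\sum_(m <- n) (m - 1)) + 1) (F a).

Definition Hom0 (k : nat) (F : seq A -> A') :=
  multilinear k F /\ preserves_shifted_degree k F.

Definition normal (k : nat) (F : seq A -> A') :=
  forall a : seq A, size a = k ->
    (exists2 j, (j < k)%N & nth 0 a j = 1) -> F a = 0.

Definition shsign (n : seq int) (i : nat) : R :=
  (-1) ^ (\sum_(m <- take i n) (m - 1)).

(* Psi_l[f_1,...,f_{l-1}] evaluated on a homogeneous tuple a (degrees n),
   with 0-based indexing: a_i a_{i+1} (1-based) = nth (i-1) a * nth i a. *)
Definition Psi (l : nat) (f : nat -> seq A -> A') (a : seq A) (n : seq int) : A' :=
  \sum_(1 <= i < l)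
     shsign n i *: f l.-1 (take i.-1 a ++ (nth 0 a i.-1 * nth 0 a i) :: drop i.+1 a)
  - \sum_(1 <= i < l)
     shsign n i *: (f i (take i a) * f (l - i)%N (drop i a)).

(* Psi_l is normal: it vanishes on every homogeneous l-tuple one of whose
   entries is the unit (Psi_l is the multilinear extension of this formula). *)
Definition Psi_normal (l : nat) (f : nat -> seq A -> A') :=
  forall a n, homtuple l a n ->
    (exists2 j, (j < l)%N & nth 0 a j = 1) -> Psi l f a n = 0.

End Maps.

From Pilot Require Import Defs.
From HB Require Import structures.
From mathcomp Require Import all_boot all_order all_algebra.
From mathcomp Require Import reals.
From mathcomp Require Import zify.
Set Implicit Arguments. Unset Strict Implicit. Unset Printing Implicit Defensive.
Local Open Scope ring_scope.
Import GRing.Theory.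

(* Let a_j = 1. Every term of Psi_l that feeds the unit to some f_k with
   k >= 2 vanishes by normality. The surviving terms are the (at most two)
   contraction terms merging a_j with a neighbour, both of which equal
   +- f_(l-1)(a with a_j omitted), and, when a_j is the first or last entry,
   the product term f_1(1) f_(l-1)(...) resp. f_(l-1)(...) f_1(1). As
   deg a_j = 0, i.e. abar_j = -1, the two contraction terms carry opposite
   signs; at an end the single contraction term is cancelled by the product
   term since f_1(1) = 1. *)

Lemma big_nat_supported (V : nmodType) (F : nat -> V) (s : seq nat) m n :
  uniq s -> (forall i, (m <= i < n)%N -> i \notin s -> F i = 0) ->
  \sum_(m <= i < n) F i = \sum_(i <- s | (m <= i < n)%N) F i.
Proof.
move=> s_uniq F_supp; rewrite big_nat_cond (bigID (mem s)) /=.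
rewrite [X in _ + X]big1 ?addr0; last by move=> i /andP[/andP[+ _]]; exact: F_supp.
rewrite -big_filter -[RHS]big_filter; apply: perm_big; apply: uniq_perm.
- by apply: filter_uniq; exact: iota_uniq.
- exact: filter_uniq.
move=> i; rewrite !mem_filter mem_iota andbT; case: (i \in s); rewrite ?andbF ?andbT //.
by apply/idP/idP => [/andP[] // | hi]; apply/andP; split => //; lia.
Qed.

Lemma mem_nth_take (T : eqType) (x0 : T) (s : seq T) i j :
  (j < i)%N -> (j < size s)%N -> nth x0 s j \in take i s.
Proof.
by move=> ji js; rewrite -(nth_take x0 ji); apply: mem_nth; rewrite size_take_min; lia.
Qed.

Lemma mem_nth_drop (T : eqType) (x0 : T) (s : seq T) i j :
  (i <= j)%N -> (j < size s)%N -> nth x0 s j \in drop i s.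
Proof.
move=> ij js; rewrite -(subnKC ij) -nth_drop; apply: mem_nth.
by rewrite size_drop; lia.
Qed.

(* The paper's (a_1, ..., a_i a_(i+1), ..., a_l), with 0-based entries. *)
Definition contract (T : pzSemiRingType) (s : seq T) (i : nat) :=
  take i.-1 s ++ (s`_i.-1 * s`_i) :: drop i.+1 s.

Section Contract.
Variables (T : pzSemiRingType) (s : seq T).

Lemma size_contract i : (0 < i < size s)%N -> size (contract s i) = (size s).-1.
Proof. by move=> hi; rewrite size_cat /= size_takel ?size_drop; lia. Qed.

Lemma mem_contract i j : (j < size s)%N -> j != i.-1 -> j != i -> s`_j \in contract s i.
Proof.
move=> js /eqP ji1 /eqP ji; rewrite mem_cat inE; case: (ltnP j i.-1) => hj.
  by rewrite mem_nth_take.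
by rewrite mem_nth_drop ?orbT //; lia.
Qed.

Lemma contract_unitr j : (0 < j < size s)%N -> s`_j = 1 ->
  contract s j = take j s ++ drop j.+1 s.
Proof.
move=> hj sj1; rewrite /contract sj1 mulr1 -cat_rcons -take_nth; last by lia.
by rewrite prednK //; lia.
Qed.

Lemma contract_unitl j : (j.+1 < size s)%N -> s`_j = 1 ->
  contract s j.+1 = take j s ++ drop j.+1 s.
Proof. by move=> hj sj1; rewrite /contract /= sj1 mul1r -drop_nth. Qed.

End Contract.

Lemma hom_uniq (R : fieldType) (A : algType R) (GA : dga A) m k (x : A) :
  x != 0 -> Defs.hom GA m x -> Defs.hom GA k x -> m = k.
Proof.
move=> x_neq0 hm hk; apply/eqP; apply: contraNT x_neq0 => mk.
pose c i : A := if i == m then x else if i == k then - x else 0.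
have hc i : Defs.hom GA i (c i).
  rewrite /c; case: eqP => [-> // | _]; case: eqP => [-> | _]; last exact: hom0.
  by rewrite -scaleN1r -[_ *: x]addr0; apply: homD => //; exact: hom0.
have mk_uniq : uniq [:: m; k] by rewrite /= inE mk.
have := hom_indep mk_uniq hc; rewrite !big_cons big_nil addr0 /c eqxx eq_sym (negbTE mk) eqxx subrr.
by move=> /(_ erefl m (mem_head _ _)); rewrite eqxx => ->.
Qed.

Lemma hom_one_deg (R : fieldType) (A : algType R) (GA : dga A) m :
  Defs.hom GA m 1 -> m = 0.
Proof. by move=> hm; apply: (hom_uniq (oner_neq0 A) hm); exact: hom_one. Qed.

Lemma shsignS (R : fieldType) (n : seq int) i : (i < size n)%N ->
  shsign R n i.+1 = shsign R n i * (-1) ^ (n`_i - 1).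
Proof.
move=> hi; rewrite /shsign (take_nth 0 hi) -cats1 big_cat big_seq1 exprzDr //.
exact: unitrN1.
Qed.

Lemma normal_mem (R : fieldType) (A A' : algType R) k (F : seq A -> A') s :
  normal k F -> size s = k -> 1 \in s -> F s = 0.
Proof.
move=> F_normal s_size s1; apply: F_normal => //; exists (index 1 s); last exact: nth_index.
by rewrite -s_size index_mem.
Qed.

Section PsiAtUnit.
Variables (R : fieldType) (A A' : algType R) (l : nat) (f : nat -> seq A -> A').
Hypotheses (l_ge2 : (2 <= l)%N) (f1_unital : f 1%N [:: 1] = 1).
Hypothesis f_normal : forall i, (2 <= i < l)%N -> normal i (f i).
Variables (a : seq A) (n : seq int) (j : nat).
Hypotheses (size_a : size a = l) (size_n : size n = l) (lt_jl : (j < l)%N).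
Hypotheses (aj1 : a`_j = 1) (nj0 : n`_j = 0).

Let contraction_term i := shsign R n i *: f l.-1 (contract a i).
Let product_term i := shsign R n i *: (f i (take i a) * f (l - i)%N (drop i a)).
Let omitted := f l.-1 (take j a ++ drop j.+1 a).

Lemma shsign_unit : shsign R n j.+1 = - shsign R n j.
Proof. by rewrite shsignS ?size_n // nj0 sub0r exprN1 invrN1 mulrN1. Qed.

Lemma contraction_term_eq0 i : (1 <= i < l)%N -> i != j -> i != j.+1 ->
  contraction_term i = 0.
Proof.
move=> hi /eqP ij /eqP ij1; rewrite /contraction_term (@normal_mem _ _ _ l.-1) ?scaler0 //.
- by apply: f_normal; lia.
- by rewrite size_contract size_a //; lia.
- by rewrite -aj1 mem_contract ?size_a //; apply/eqP; lia.
Qed.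

Lemma contraction_term_unitr : (0 < j)%N -> contraction_term j = shsign R n j *: omitted.
Proof. by move=> j_gt0; rewrite /contraction_term contract_unitr ?size_a ?j_gt0. Qed.

Lemma contraction_term_unitl : (j.+1 < l)%N ->
  contraction_term j.+1 = shsign R n j.+1 *: omitted.
Proof. by move=> hj; rewrite /contraction_term contract_unitl ?size_a. Qed.

Lemma product_term_eq0 i : (1 <= i < l)%N -> (i, j) != (1, 0)%N -> (i, j) != (l.-1, l.-1) ->
  product_term i = 0.
Proof.
rewrite !xpair_eqE => hi not_first not_last; rewrite /product_term; case: (ltnP j i) => hj.
  rewrite (@normal_mem _ _ _ i (f i)) ?mul0r ?scaler0 //.
  - by apply: f_normal; lia.
  - by rewrite size_takel ?size_a //; lia.
  - by rewrite -aj1 mem_nth_take ?size_a.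
rewrite (@normal_mem _ _ _ (l - i) (f (l - i)%N) (drop i a)) ?mulr0 ?scaler0 //.
- by apply: f_normal; lia.
- by rewrite size_drop size_a.
- by rewrite -aj1 mem_nth_drop ?size_a.
Qed.

Lemma product_term_first : j = 0%N -> product_term 1 = shsign R n 1 *: omitted.
Proof.
move=> j0; move: aj1 size_a; rewrite /product_term /omitted j0 subn1 /=.
case: a => [|a0 a'] /= a0_1 sa; first lia.
by rewrite take0 a0_1 f1_unital mul1r.
Qed.

Lemma product_term_last : j = l.-1 -> product_term l.-1 = shsign R n l.-1 *: omitted.
Proof.
move=> jl1; rewrite /product_term /omitted -jl1 (drop_nth 0) ?size_a // aj1.
have -> : drop j.+1 a = [::] by apply: drop_oversize; lia.
by rewrite cats0 (_ : l - j = 1)%N ?f1_unital ?mulr1 //; lia.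
Qed.

Lemma Psi_eq0_at_unit : Psi l f a n = 0.
Proof.
have -> : Psi l f a n = \sum_(1 <= i < l) contraction_term i - \sum_(1 <= i < l) product_term i.
  by [].
have contraction_supp i : (1 <= i < l)%N -> i \notin [:: j; j.+1] -> contraction_term i = 0.
  by rewrite !inE negb_or => hi /andP[]; exact: contraction_term_eq0.
rewrite (big_nat_supported _ contraction_supp); last by rewrite /= inE; lia.
rewrite !big_cons big_nil addr0.
case: (posnP j) => [j0 | j_gt0].
  rewrite (@big_nat_supported _ _ [:: 1%N]) // => [|i hi]; last first.
    by rewrite inE => ?; apply: product_term_eq0; rewrite // xpair_eqE; lia.
  have j1l : (j.+1 < l)%N by lia.
  rewrite !big_cons big_nil addr0 j1l l_ge2 /=.
  by rewrite product_term_first // contraction_term_unitl // j0 subrr.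
rewrite lt_jl /=; have [j1l | jl1] : (j.+1 < l)%N \/ j = l.-1 by lia.
  rewrite (@big_nat_supported _ _ [::]) ?big_nil // => [|i hi _]; last first.
    by apply: product_term_eq0; rewrite // xpair_eqE; lia.
  by rewrite j1l subr0 contraction_term_unitr // contraction_term_unitl // shsign_unit scaleNr subrr.
rewrite (@big_nat_supported _ _ [:: l.-1]) // => [|i hi]; last first.
  by rewrite inE => ?; apply: product_term_eq0; rewrite // xpair_eqE; lia.
have -> : (j.+1 < l)%N = false by lia.
rewrite big_cons big_nil /= (_ : (0 < l.-1 < l)%N); last by lia.
by rewrite product_term_last // -jl1 contraction_term_unitr // !addr0 subrr.
Qed.

End PsiAtUnit.

Theorem proposition2 (R : realType) (A A' : algType R)
  (GA : dga A) (GA' : dga A') (l : nat) (hl : (2 <= l)%N)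
  (f : nat -> seq A -> A')
  (hHom : forall i, (1 <= i < l)%N -> Hom0 GA GA' i (f i))
  (hunit : f 1%N [:: 1] = 1)
  (hnormal : forall i, (2 <= i < l)%N -> normal i (f i)) :
  Psi_normal GA l f.
Proof.
move=> a n [size_a size_n a_hom] [j lt_jl aj1].
apply: (Psi_eq0_at_unit hl hunit hnormal size_a size_n lt_jl aj1).
by apply: (@hom_one_deg _ _ GA); rewrite -aj1; apply: a_hom.
Qed.
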